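(* Let $K_{23}-K_5$ denote the graph with vertex set $\mathbb{Z}_{18}\cup\{a,b,c,d,e\}$ containing all edges except the ten edges among $a,b,c,d,e$. Consider the cyclic sequences $$L_0=(10, 16, a, 2, b, 4, c, 8, d, 7, e, 17, 14, 3, 9, 12, 13, 5, 1, 6, 15, 11),$$ $$L_1=(8, 1, a, 2, 12, 9, 3, 7, c, 14, b, 13, e, 11, d, 16, 10, 5, 17, 4, 15, 6),$$ $$L_2=(16, a, 17, 7, 4, 3, 12, 2, d, 10, c, 11, 14, 13, 8, 6, 9, 15, 1, e, 5, b).$$ For $\gamma\in\mathbb{Z}_{18}$, let the rotation at $\gamma$ be obtained from $L_{\gamma\bmod 3}$ by adding $\gamma$ (mod 18) to every numerical entry, leaving letters unchanged. Then there exist rotations at $a,b,c,d,e$ such that the resulting rotation system is a triangular embedding of $K_{23}-K_5$ in the orientable surface $S_{30}$ of genus $30$.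
   Context: A rotation system on a simple graph assigns to each vertex a cyclic ordering of its neighbors and determines a cellular orientable embedding. An embedding is triangular if every face is a triangle. $S_k$ denotes the orientable surface of genus $k$. *)

From mathcomp Require Import all_boot.
Set Implicit Arguments. Unset Strict Implicit. Unset Printing Implicit Defensive.

(* Vertices of K_23 - K_5: inl i is i in Z_18, inr j is the j-th letter
   (a,b,c,d,e = inr 0,...,inr 4). *)
Definition V : finType := ('I_18 + 'I_5)%type.

Definition num (k : nat) : V := inl (inord k).
Definition let_a : V := inr (inord 0).
Definition let_b : V := inr (inord 1).
Definition let_c : V := inr (inord 2).
Definition let_d : V := inr (inord 3).
Definition let_e : V := inr (inord 4).

Definition is_letter (v : V) : bool := if v is inr _ then true else false.

Definition adjK (u v : V) : bool := (u != v) && ~~ (is_letter u && is_letter v).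

(* A rotation system: rho v is a cyclic ordering (a duplicate-free
   sequence read cyclically) of exactly the neighbours of v. *)
Definition is_rotation_system (T : finType) (adj : rel T) (rho : T -> seq T) : Prop :=
  forall v, uniq (rho v) /\ forall u, (u \in rho v) = adj v u.

Definition darts (T : finType) (adj : rel T) : {set T * T} :=
  [set p | adj p.1 p.2].

Definition face_step (T : finType) (rho : T -> seq T) (p : T * T) : T * T :=
  (p.2, next (rho p.2) p.1).

Definition triangular (T : finType) (adj : rel T) (rho : T -> seq T) : Prop :=
  forall u v, adj u v -> iter 3 (face_step rho) (u, v) = (u, v).

Definition num_faces (T : finType) (adj : rel T) (rho : T -> seq T) : nat :=
  fcard (face_step rho) (mem (darts adj)).

Definition num_edges (T : finType) (adj : rel T) : nat := #|darts adj| %/ 2.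

(* The (connected graph's) rotation system embeds in S_g iff
   V - E + F = 2 - 2g, written without subtraction. *)
Definition embeds_in_genus (T : finType) (adj : rel T) (rho : T -> seq T) (g : nat) : Prop :=
  #|T| + num_faces adj rho + 2 * g = num_edges adj + 2.

Definition L0 : seq V :=
  [:: num 10; num 16; let_a; num 2; let_b; num 4; let_c; num 8; let_d; num 7; let_e;
      num 17; num 14; num 3; num 9; num 12; num 13; num 5; num 1; num 6; num 15; num 11].
Definition L1 : seq V :=
  [:: num 8; num 1; let_a; num 2; num 12; num 9; num 3; num 7; let_c; num 14; let_b;
      num 13; let_e; num 11; let_d; num 16; num 10; num 5; num 17; num 4; num 15; num 6].
Definition L2 : seq V :=
  [:: num 16; let_a; num 17; num 7; num 4; num 3; num 12; num 2; let_d; num 10; let_c;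
      num 11; num 14; num 13; num 8; num 6; num 9; num 15; num 1; let_e; num 5; let_b].

Definition Lbase (r : nat) : seq V :=
  match r with 0 => L0 | 1 => L1 | _ => L2 end.

Definition shift (g : nat) (x : V) : V :=
  match x with inl i => num ((i + g) %% 18) | inr j => inr j end.

Definition rot_sys (rhoL : 'I_5 -> seq V) (v : V) : seq V :=
  match v with
  | inl g => map (shift g) (Lbase (g %% 3))
  | inr j => rhoL j
  end.

From mathcomp Require Import all_boot.
Set Implicit Arguments. Unset Strict Implicit. Unset Printing Implicit Defensive.

(* As the graph has no loops, the face-tracing permutation
   fixes no dart, so each of its orbits on the 2E = 486 darts has exactly three
   elements; hence F = 162 and Euler's formula 23 - 243 + 162 = 2 - 2 * 30
   gives the genus. *)

Lemma order_iter3 (T : finType) (f : T -> T) (x : T) :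
  iter 3 f x = x -> f x != x -> order f x = 3.
Proof.
move=> f3x fx_neq; apply: (@order_cycle _ _ [:: x; f x; f (f x)]); last first.
- exact: mem_head.
- rewrite /= !inE negb_or (eq_sym x) fx_neq andbT; apply/andP; split.
  + by apply: contra fx_neq => /eqP f2x; rewrite -{2}f3x /= -f2x.
  + by apply: contra fx_neq => /eqP f2x; rewrite -{2}f3x /= -!f2x.
- by rewrite /cycle /= -[f (f (f x))]/(iter 3 f x) f3x !eqxx.
Qed.

Section RotationSystem.

Variables (T : finType) (adj : rel T) (rho : T -> seq T).
Hypothesis rho_rot : is_rotation_system adj rho.

Lemma face_step_inj : injective (face_step rho).
Proof.
move=> [u v] [u' v'] [<- eq_next]; have [rho_uniq _] := rho_rot v.
by rewrite -[u](prev_next rho_uniq) eq_next prev_next.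
Qed.

Lemma card_darts : #|darts adj| = \sum_v size (rho v).
Proof.
transitivity (\sum_v \sum_(u | adj v u) 1).
  by rewrite pair_big_dep -sum1_card; apply: eq_bigl => p; rewrite inE.
apply: eq_bigr => v _; have [rho_uniq mem_rho] := rho_rot v.
by rewrite sum1_card -(card_uniqP rho_uniq); apply: eq_card => u; rewrite mem_rho.
Qed.

Hypotheses (adj_irr : irreflexive adj) (adj_sym : symmetric adj).

Lemma darts_face_closed : fclosed (face_step rho) (mem (darts adj)).
Proof.
move=> [u v] _ /eqP <-; rewrite !inE /=.
by rewrite -(rho_rot v).2 mem_next (rho_rot v).2 adj_sym.
Qed.

Lemma triangular_num_faces :
  triangular adj rho -> num_faces adj rho * 3 = #|darts adj|.
Proof.
move=> rho_tri; apply: (fcard_order_set face_step_inj _ darts_face_closed).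
apply/subsetP => [[u v]]; rewrite !inE /= => adj_uv.
rewrite order_iter3 ?rho_tri //; apply: contraTneq adj_uv => -[vu _].
by rewrite vu adj_irr.
Qed.

End RotationSystem.

(* [inord] goes through the opaque [idP], so terms built with [num] and the
   letters do not reduce; [vnum] and [vlet] are computable replacements. *)
Definition vnum (k : nat) : V := inl (Ordinal (ltn_pmod k (isT : 0 < 18))).
Definition vlet (k : nat) : V := inr (Ordinal (ltn_pmod k (isT : 0 < 5))).

Lemma num_modE (k : nat) : num (k %% 18) = vnum k.
Proof. by congr inl; apply: val_inj; rewrite /= inordK ?ltn_pmod. Qed.

Lemma num_vnum (k : nat) : k < 18 -> num k = vnum k.
Proof. by move=> k_lt; rewrite -num_modE modn_small. Qed.

Lemma inord_vlet (k : nat) : k < 5 -> inr (inord k) = vlet k.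
Proof. by move=> k_lt; congr inr; apply: val_inj; rewrite /= inordK ?modn_small. Qed.

Definition vertices : seq V := map vnum (iota 0 18) ++ map vlet (iota 0 5).

Lemma mem_vertices (v : V) : v \in vertices.
Proof.
rewrite mem_cat; case: v => i; apply/orP; [left | right]; apply/mapP;
  exists (val i); rewrite ?mem_iota ?ltn_ord //;
  by congr (_ _); apply: val_inj; rewrite /= modn_small.
Qed.

Definition letter_rotation (step : nat) (t : seq nat) : seq V :=
  [seq vnum (x + k * step) | k <- iota 0 6, x <- t].

(* Each rotation at a letter consists of its first three entries followed by
   their successive translates by 3 (by -3 at a), so, like the rotations at
   the numbers, the whole system is invariant under adding 3. *)
Definition rot_letters (j : 'I_5) : seq V :=
  nth [::] [:: letter_rotation 15 [:: 0; 16; 17]; letter_rotation 3 [:: 0; 2; 7];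
               letter_rotation 3 [:: 0; 4; 11]; letter_rotation 3 [:: 0; 8; 10];
               letter_rotation 3 [:: 0; 7; 2]] j.

Definition Lbase_comp (r : nat) : seq V :=
  match r with
  | 0 => [:: vnum 10; vnum 16; vlet 0; vnum 2; vlet 1; vnum 4; vlet 2; vnum 8;
             vlet 3; vnum 7; vlet 4; vnum 17; vnum 14; vnum 3; vnum 9; vnum 12;
             vnum 13; vnum 5; vnum 1; vnum 6; vnum 15; vnum 11]
  | 1 => [:: vnum 8; vnum 1; vlet 0; vnum 2; vnum 12; vnum 9; vnum 3; vnum 7;
             vlet 2; vnum 14; vlet 1; vnum 13; vlet 4; vnum 11; vlet 3; vnum 16;
             vnum 10; vnum 5; vnum 17; vnum 4; vnum 15; vnum 6]
  | _ => [:: vnum 16; vlet 0; vnum 17; vnum 7; vnum 4; vnum 3; vnum 12; vnum 2;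
             vlet 3; vnum 10; vlet 2; vnum 11; vnum 14; vnum 13; vnum 8; vnum 6;
             vnum 9; vnum 15; vnum 1; vlet 4; vnum 5; vlet 1]
  end.

Lemma LbaseE (r : nat) : Lbase r = Lbase_comp r.
Proof.
by case: r => [|[|r]]; rewrite /= /L0 /L1 /L2 /let_a /let_b /let_c /let_d /let_e
  !num_vnum // !inord_vlet.
Qed.

Definition rot_comp (v : V) : seq V :=
  match v with
  | inl g =>
      [seq if x is inl i then vnum (i + g) else x | x : V <- Lbase_comp (g %% 3)]
  | inr j => rot_letters j
  end.

Lemma rot_sysE (v : V) : rot_sys rot_letters v = rot_comp v.
Proof.
by case: v => //= g; rewrite LbaseE; apply: eq_map => -[i|j] //=; rewrite num_modE.
Qed.

Lemma rot_comp_rotation :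
  all (fun v => uniq (rot_comp v) &&
                all (fun u => (u \in rot_comp v) == adjK v u) vertices) vertices.
Proof. by vm_compute. Qed.

Lemma rot_comp_triangular :
  all (fun u => all (fun v => adjK u v ==>
         (iter 3 (face_step rot_comp) (u, v) == (u, v))) vertices) vertices.
Proof. by vm_compute. Qed.

Lemma rot_sys_rotation : is_rotation_system adjK (rot_sys rot_letters).
Proof.
move=> v; have /andP[rot_uniq /allP rot_mem] :=
  allP rot_comp_rotation v (mem_vertices v).
by rewrite rot_sysE; split=> // u; apply/eqP/rot_mem/mem_vertices.
Qed.

Lemma rot_sys_triangular : triangular adjK (rot_sys rot_letters).
Proof.
move=> u v adj_uv; rewrite (eq_iter (_ : face_step _ =1 face_step rot_comp)).
  have /allP/(_ v (mem_vertices v)) := allP rot_comp_triangular u (mem_vertices u).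
  by rewrite adj_uv => /eqP.
by move=> p; rewrite /face_step rot_sysE.
Qed.

Lemma adjK_irr : irreflexive adjK.
Proof. by move=> v; rewrite /adjK eqxx. Qed.

Lemma adjK_sym : symmetric adjK.
Proof. by move=> u v; rewrite /adjK eq_sym (andbC (is_letter u)). Qed.

Lemma card_darts_adjK : #|darts adjK| = 486.
Proof.
rewrite (card_darts rot_sys_rotation) big_sumType /=.
have size_Lbase r : size (Lbase r) = 22 by case: r => [|[|]].
have size_letters j : size (rot_letters j) = 18.
  by case: j => -[|[|[|[|[|]]]]] //= _; rewrite size_allpairs.
under eq_bigr do rewrite size_map size_Lbase.
under [X in _ + X]eq_bigr do rewrite size_letters.
by rewrite !sum_nat_const !card_ord.
Qed.

Theorem mainTheorem5 :
  exists rhoL : 'I_5 -> seq V,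
    is_rotation_system adjK (rot_sys rhoL) /\
    triangular adjK (rot_sys rhoL) /\
    embeds_in_genus adjK (rot_sys rhoL) 30.
Proof.
exists rot_letters; split; first exact: rot_sys_rotation.
split; first exact: rot_sys_triangular.
have := triangular_num_faces rot_sys_rotation adjK_irr adjK_sym rot_sys_triangular.
rewrite /embeds_in_genus /num_edges card_darts_adjK card_sum !card_ord => faces3.
suff -> : num_faces adjK (rot_sys rot_letters) = 162 by [].
by apply/eqP; rewrite -(eqn_pmul2r (isT : 0 < 3)) faces3.
Qed.
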